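(* Let $G$ be a finite connected multigraph (multiple edges and self-loops allowed) with $n\ge2$ vertices, having two distinct distinguished vertices $v_A,v_B$ of degree $3$ while every other vertex has degree $4$ (a connected two-point $\phi^4$ graph; $v_A,v_B$ are its external vertices, each carrying one external leg). Suppose $G$ contains no generalized tadpole subgraph. Then there exists an exhausting sequence of cuts for $G$, i.e. a sequence of vertex sets $\emptyset=A_0\subsetneq A_1\subsetneq\cdots\subsetneq A_{n-1}\subsetneq A_n=V(G)$ such that for every $p=1,\dots,n-1$, $(A_p,B_p:=V(G)\setminus A_p)$ is an $(A,B)$-cut of $G$.
   Context: A set $S$ of vertices of $G$ is connected if the subgraph consisting of the vertices of $S$ and all lines of $G$ with both ends in $S$ (its inner lines) is connected. For a connected vertex set $S$, its external half-lines are the half-lines (including external legs of $v_A,v_B$) at vertices of $S$ that do not belong to inner lines of $S$. A generalized tadpole subgraph is a connected vertex set $S$ with exactly two external half-lines, both attached to the same vertex of $S$. An $(A,B)$-cut of $G$ is a partition of the vertex set of $G$ into two sets $A$ and $B$ with $v_A\in A$, $v_B\in B$, and both $A$ and $B$ connected. *)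

From mathcomp Require Import all_boot.
Set Implicit Arguments.
Unset Strict Implicit.
Unset Printing Implicit Defensive.

Section TwoPointGraph.
Variables (V E : finType) (src tgt : E -> V) (vA vB : V).

(* Half-lines: inl (e, false) = the src-half of line e, inl (e, true) = the
   tgt-half of line e; inr false = external leg at vA, inr true = external
   leg at vB. *)
Definition halfline : finType := ((E * bool) + bool)%type.

Definition hvert (h : halfline) : V :=
  match h with
  | inl (e, b) => if b then tgt e else src e
  | inr b => if b then vB else vA
  end.

Definition inner_line (S : {set V}) (e : E) : bool :=
  (src e \in S) && (tgt e \in S).

Definition half_in_inner (S : {set V}) (h : halfline) : bool :=
  match h with
  | inl (e, _) => inner_line S e
  | inr _ => false
  end.

Definition ext_half (S : {set V}) : {set halfline} :=
  [set h | (hvert h \in S) && ~~ half_in_inner S h].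

Definition adjS (S : {set V}) : rel V := fun x y =>
  [&& x \in S, y \in S &
      [exists e, ((src e == x) && (tgt e == y)) || ((src e == y) && (tgt e == x))]].

Definition connected_set (S : {set V}) : bool :=
  (S != set0) && [forall x in S, forall y in S, connect (adjS S) x y].

Definition gen_tadpole (S : {set V}) : bool :=
  [&& connected_set S, #|ext_half S| == 2 &
      [exists v, forall h in ext_half S, hvert h == v]].

(* degree = number of line half-edges at v (self-loop counts twice),
   external legs not counted *)
Definition deg (v : V) : nat := #|[set h : E * bool | hvert (inl h) == v]|.

Definition two_point_phi4 : Prop :=
  [/\ vA != vB, connected_set setT, deg vA = 3, deg vB = 3
    & forall v, v != vA -> v != vB -> deg v = 4].

Definition AB_cut (A : {set V}) : bool :=
  [&& vA \in A, vB \in ~: A, connected_set A & connected_set (~: A)].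

End TwoPointGraph.

From mathcomp Require Import all_boot zify.
Set Implicit Arguments.
Unset Strict Implicit.
Unset Printing Implicit Defensive.

(* Every vertex carries exactly four half-lines once the external legs are
   counted, so every vertex set has an even number of external half-lines.
   Let [W] be connected, [w] in [W], and [C] a component of [W \ w] containing
   no external vertex and sending no line out of [W].  Then all external
   half-lines of [w ∪ C] sit at [w], and the line joining [C] to [w] makes one
   half-line of [w] inner; so if some half-line of [w] leaves [w ∪ C], the set
   [w ∪ C] has exactly two external half-lines and is a generalized tadpole.

   Excluding tadpoles, this shows that [V \ vA] is connected, and that a cut
   [(A, B)] with [|B| > 1] can be extended by one vertex: among the vertices
   [v ≠ vB] of [B] adjacent to [A], choose one for which the component of [vB]
   in [B \ v] is largest.  If that component missed part of [B \ v], the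
   missed part would either contain such a vertex with a larger component, or
   together with [v] form a tadpole.  Starting from [{vA}] and adding one
   vertex at a time gives the exhausting sequence of cuts. *)

Lemma connect_cross (T : finType) (e : rel T) (P : {pred T}) a b :
  connect e a b -> a \in P -> b \notin P ->
  exists x y, [/\ x \in P, y \notin P & e x y].
Proof.
move=> /connectP[p]; elim: p a => [|c p IH] a /=; first by move=> _ -> ->.
move=> /andP[eac pth] lst aP bP.
case cP: (c \in P); first exact: IH pth lst cP bP.
by exists a, c; rewrite cP aP eac.
Qed.

Section Connectivity.
Variables (V E : finType) (src tgt : E -> V).

Local Notation adj S := (adjS src tgt S).
Local Notation connected S := (connected_set src tgt S).

Definition adjacent x y :=
  [exists e, ((src e == x) && (tgt e == y)) || ((src e == y) && (tgt e == x))].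

Lemma adjSE (S : {set V}) x y : adj S x y = [&& x \in S, y \in S & adjacent x y].
Proof. by []. Qed.

Lemma adjacent_sym : symmetric adjacent.
Proof. by move=> x y; apply/existsP/existsP=> -[e He]; exists e; rewrite orbC. Qed.

Lemma connect_adjS_sym (S : {set V}) : connect_sym (adj S).
Proof. by apply: sym_connect_sym => x y; rewrite !adjSE adjacent_sym andbCA. Qed.

Lemma connect_adjS_sub (S S' : {set V}) x y : S \subset S' ->
  connect (adj S) x y -> connect (adj S') x y.
Proof.
move=> sSS'; apply: connect_sub => u v /and3P[uS vS uv].
by apply: connect1; rewrite adjSE (subsetP sSS' _ uS) (subsetP sSS' _ vS).
Qed.

Lemma connect_adjS_mem (S : {set V}) x y :
  connect (adj S) x y -> x \in S -> y \in S.
Proof.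
move=> cxy xS; apply/negPn/negP=> yS.
by have [u [v [_ vS /and3P[_ vS' _]]]] := connect_cross cxy xS yS; rewrite vS' in vS.
Qed.

Lemma connected_set_from (S : {set V}) r : r \in S ->
  (forall y, y \in S -> connect (adj S) r y) -> connected S.
Proof.
move=> rS rS_conn; apply/andP; split; first by apply/set0Pn; exists r.
apply/forallP=> x; apply/implyP=> xS; apply/forallP=> z; apply/implyP=> zS.
by apply: connect_trans (rS_conn z zS); rewrite connect_adjS_sym rS_conn.
Qed.

Lemma connected_connect (S : {set V}) x y :
  connected S -> x \in S -> y \in S -> connect (adj S) x y.
Proof. by case/andP=> _ /forallP/(_ x)/implyP cS /cS/forallP/(_ y)/implyP. Qed.

Lemma connected_setU1 (S : {set V}) s w :
  connected S -> s \in S -> adjacent s w -> connected (w |: S).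
Proof.
move=> cS sS sw; apply: (connected_set_from (setU11 w S)) => y.
have ws : connect (adj (w |: S)) w s.
  by apply: connect1; rewrite adjSE setU11 setU1r // adjacent_sym.
rewrite in_setU1 => /orP[/eqP-> | yS]; first exact: connect0.
apply: connect_trans ws _; apply: connect_adjS_sub (subsetUr _ _) _.
exact: connected_connect.
Qed.

Definition component (S : {set V}) y := [set z | connect (adj S) y z].

Lemma component_id (S : {set V}) y : y \in component S y.
Proof. by rewrite inE connect0. Qed.

Lemma component_sub (S : {set V}) y : y \in S -> component S y \subset S.
Proof. by move=> yS; apply/subsetP=> z; rewrite inE => /connect_adjS_mem; apply. Qed.

Lemma component_sym (S : {set V}) x y : (x \in component S y) = (y \in component S x).
Proof. by rewrite !inE connect_adjS_sym. Qed.

Lemma component_trans (S : {set V}) x y z :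
  x \in component S y -> z \in component S x -> z \in component S y.
Proof. by rewrite !inE; apply: connect_trans. Qed.

Lemma component_closed (S : {set V}) y x z : y \in S ->
  x \in component S y -> z \in S -> adjacent x z -> z \in component S y.
Proof.
move=> yS xC zS xz; have xS := subsetP (component_sub yS) _ xC.
by apply: component_trans xC _; rewrite inE connect1 // adjSE xS zS.
Qed.

Lemma connected_component (S : {set V}) y : connected (component S y).
Proof.
apply: (connected_set_from (component_id S y)) => z /[!inE] /connectP[p yp ->].
apply/connectP; exists p => //.
apply: (@sub_in_path _ [pred x | x \in component S y] (adj S)) (yp).
- by move=> u v cu cv /and3P[_ _ uv]; rewrite adjSE cu cv.
- by apply/allP=> u /(path_connect yp) yu; rewrite /= inE.
Qed.

Lemma component_setD1_proper (B : {set V}) r v v' :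
  connected B -> r \in B :\ v -> v \in B -> v' \in B :\ v ->
  v' \notin component (B :\ v) r ->
  component (B :\ v) r \proper component (B :\ v') r.
Proof.
move=> cB rBv vB v'Bv v'R; set R := component (B :\ v) r.
have RBv : R \subset B :\ v := component_sub rBv.
have RBv' : R \subset B :\ v'.
  apply/subsetP=> z zR; rewrite in_setD1 (subsetP (subD1set B v) _ (subsetP RBv _ zR)).
  by rewrite andbT; apply: contraNneq v'R => <-.
have rBv' := subsetP RBv' _ (component_id _ r).
have vR : v \notin R by apply/negP=> /(subsetP RBv); rewrite setD11.
have RR' : R \subset component (B :\ v') r.
  apply/subsetP=> z zR; rewrite inE; apply: connect_adjS_sub RBv' _.
  exact: connected_connect (connected_component _ _) (component_id _ _) zR.
apply/properP; split=> //; exists v => //.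
have rB := subsetP (subD1set B v) _ rBv.
have [a [b [aR bR /and3P[_ bB ab]]]] :=
  connect_cross (connected_connect cB rB vB) (component_id _ r) vR.
have bv : b = v.
  apply: contraNeq bR => bv; apply: component_closed rBv aR _ ab.
  by rewrite in_setD1 bv.
rewrite {b bR bB}bv in ab.
apply: component_closed rBv' (subsetP RR' _ aR) _ ab.
by rewrite in_setD1 vB andbT eq_sym; case/setD1P: v'Bv.
Qed.
End Connectivity.
Section Phi4.
Variables (V E : finType) (src tgt : E -> V) (vA vB : V).
Hypothesis phi4 : two_point_phi4 src tgt vA vB.

Local Notation hv := (hvert src tgt vA vB).
Local Notation adjacent := (adjacent src tgt).
Local Notation inner_half := (half_in_inner src tgt).
Local Notation ext_half := (ext_half src tgt vA vB).
Local Notation connected := (connected_set src tgt).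
Local Notation component := (component src tgt).

Lemma inner_halfE (S : {set V}) e b :
  inner_half S (inl (e, b)) = (hv (inl (e, b)) \in S) && (hv (inl (e, ~~ b)) \in S).
Proof. by case: b; rewrite /= /inner_line // andbC. Qed.

Lemma adjacentP x z :
  reflect (exists e b, hv (inl (e, b)) = x /\ hv (inl (e, ~~ b)) = z) (adjacent x z).
Proof.
apply: (iffP existsP) => [[e /orP[] /andP[/eqP sx /eqP tz]] | [e [[] [hx hz]]]].
- by exists e, false.
- by exists e, true.
- by exists e; rewrite -hx -hz !eqxx orbT.
- by exists e; rewrite -hx -hz !eqxx.
Qed.

Lemma card_halves_at w : #|[set h | hv h == w]| = 4.
Proof.
case: phi4 => nAB _ dA dB dO.
rewrite -sum1_card (eq_bigl (fun h => hv h == w)) => [|h]; last by rewrite inE.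
rewrite (big_sumType _ (fun h : halfline E => hv h == w)) /=.
have -> : \sum_(h : E * bool | hv (inl h) == w) 1 = deg src tgt vA vB w.
  by rewrite /deg -sum1_card; apply: eq_bigl => h; rewrite inE.
rewrite big_mkcond big_bool /=.
have [->|nA] := eqVneq w vA; first by rewrite dA eq_sym (negbTE nAB).
have [->|nB] := eqVneq w vB; first by rewrite dB.
by rewrite dO // eq_sym (negbTE nB).
Qed.

Lemma card_halves_in (S : {set V}) : #|[set h | hv h \in S]| = 4 * #|S|.
Proof.
rewrite -sum1_card (partition_big hv (mem S)) => [|h]; last by rewrite inE.
rewrite -sum1_card big_distrr /= muln1; apply: eq_bigr => v vS.
rewrite -(card_halves_at v) -sum1_card; apply: eq_bigl => h.
by rewrite !inE; case: eqP => [->|]; rewrite ?vS ?andbF.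
Qed.

Lemma card_inner_halves (S : {set V}) :
  #|[set h | inner_half S h]| = 2 * #|[set e | inner_line src tgt S e]|.
Proof.
have -> : [set h | inner_half S h] = inl @: setX [set e | inner_line src tgt S e] setT.
  apply/setP=> -[[e b]|b]; rewrite inE /=.
    by rewrite mem_imset ?inE ?andbT // => ? ? [].
  by apply/esym/imsetP=> -[].
by rewrite card_imset => [|? ? []//]; rewrite cardsX cardsT card_bool mulnC.
Qed.

Lemma ext_half_even (S : {set V}) : ~~ odd #|ext_half S|.
Proof.
set H := [set h | hv h \in S]; set I := [set h | inner_half S h].
have -> : ext_half S = H :\: I by apply/setP=> h; rewrite !inE andbC.
have /setIidPr HI : I \subset H.
  by apply/subsetP=> h; rewrite !inE; case: h => [[e b]|//]; rewrite inner_halfE => /andP[].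
have := cardsID I H; rewrite HI card_halves_in card_inner_halves => /(congr1 odd).
by rewrite oddD !oddM /= => ->.
Qed.

Lemma gen_tadpole_at (S : {set V}) w h0 h1 : connected S ->
  (forall h, h \in ext_half S -> hv h = w) ->
  hv h0 = w -> inner_half S h0 -> hv h1 = w -> ~~ inner_half S h1 ->
  gen_tadpole src tgt vA vB S.
Proof.
move=> cS ext_w h0w h0in h1w h1out.
have wS : w \in S.
  by case: h0 h0w h0in => [[e b]|//] <-; rewrite inner_halfE => /andP[].
have h1ext : h1 \in ext_half S by rewrite inE h1w wS.
have le3 : #|ext_half S| <= 3.
  have sub : ext_half S \subset [set h | hv h == w] :\ h0.
    apply/subsetP=> h hE; rewrite !inE ext_w // eqxx andbT.
    by apply: contraTneq hE => ->; rewrite inE h0in andbF.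
  have := cardsD1 h0 [set h | hv h == w].
  by rewrite card_halves_at inE h0w eqxx add1n => -[->]; apply: subset_leq_card.
have ge1 : 0 < #|ext_half S| by apply/card_gt0P; exists h1.
apply/and3P; split=> //.
- by move: le3 ge1 (ext_half_even S); case: #|_| => [|[|[|[]]]].
- by apply/existsP; exists w; apply/forallP=> h; apply/implyP=> /ext_w ->.
Qed.

Lemma component_tadpole (W : {set V}) w y h1 :
  connected W -> w \in W -> y \in W :\ w ->
  let C := component (W :\ w) y in
  vA \notin C -> vB \notin C -> (forall x z, x \in C -> adjacent x z -> z \in W) ->
  hv h1 = w -> ~~ inner_half (w |: C) h1 ->
  gen_tadpole src tgt vA vB (w |: C).
Proof.
move=> cW wW yW C nAC nBC C_W h1w h1out.
have wC : w \notin C by apply/negP=> /(subsetP (component_sub src tgt yW)); rewrite setD11.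
have C_closed x z : x \in C -> adjacent x z -> z \in w |: C.
  move=> xC xz; rewrite in_setU1; have [//|zw] := eqVneq z w.
  by rewrite (component_closed yW xC _ xz) ?orbT // in_setD1 zw (C_W x).
have [x [z [xC zC /and3P[_ _ xz]]]] :=
  connect_cross (connected_connect cW (subsetP (subD1set W w) _ yW) wW)
    (component_id src tgt _ y) wC.
have {zC} zw : z = w by move: (C_closed x z xC xz); rewrite in_setU1 (negbTE zC) orbF => /eqP.
rewrite {z}zw in xz.
have [e [b [ex ew]]] := adjacentP _ _ xz.
apply: (gen_tadpole_at (h0 := inl (e, ~~ b)) _ _ ew _ h1w h1out).
- exact: connected_setU1 (connected_component _ _ _ _) xC xz.
- move=> h; rewrite inE in_setU1 => /andP[/orP[/eqP//|hC]].
  case: h hC => [[e' b']|[]] hC.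
  + rewrite inner_halfE in_setU1 hC orbT /= => /negP[].
    by apply: (C_closed _ _ hC); apply/adjacentP; exists e', b'.
  + by rewrite /= hC in nBC.
  + by rewrite /= hC in nAC.
- by rewrite inner_halfE negbK ew setU11 ex setU1r.
Qed.

Hypothesis no_tadpole : forall S : {set V}, ~~ gen_tadpole src tgt vA vB S.

Lemma connected_setC1 : connected (~: [set vA]).
Proof.
case: phi4 => nAB cT _ _ _.
have -> : ~: [set vA] = setT :\ vA by apply/setP=> x; rewrite !inE andbT.
have vBW : vB \in setT :\ vA by rewrite !inE andbT eq_sym.
apply: (connected_set_from vBW) => y yW; apply/negPn/negP=> nBy.
case/negP: (no_tadpole (vA |: component (setT :\ vA) y)).
apply: (component_tadpole (h1 := inr false) cT (in_setT vA) yW) => //.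
- by apply/negP=> /(subsetP (component_sub src tgt yW)); rewrite setD11.
- by rewrite component_sym inE.
- by move=> *; apply: in_setT.
Qed.

Definition candidate (A : {set V}) v :=
  [&& v \notin A, v != vB & [exists z in A, adjacent v z]].

Definition residual (A : {set V}) v := component (~: A :\ v) vB.

Lemma candidate_free_closed (A C : {set V}) : C \subset ~: A :\ vB ->
  {in C, forall x, ~~ candidate A x} ->
  forall x z, x \in C -> adjacent x z -> z \in ~: A.
Proof.
move=> CB noc x z xC xz; rewrite inE; apply: contraNN (noc x xC) => zA.
have /setD1P[xvB xA] := subsetP CB _ xC.
by rewrite /candidate -in_setC xA xvB; apply/exists_inP; exists z.
Qed.

Lemma candidate_exists (A : {set V}) : AB_cut src tgt vA vB A -> 1 < #|~: A| ->
  exists v, candidate A v.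
Proof.
case/and4P=> vAA vBB _ cB /card_gt1P[x [z [xB zB xz]]].
have [y yB yvB] : exists2 y, y \in ~: A & y != vB.
  by have [xvB|] := eqVneq x vB; [exists z; rewrite // -xvB eq_sym | exists x].
have yW : y \in ~: A :\ vB by rewrite in_setD1 yvB.
have CW := component_sub src tgt yW.
apply/existsP; apply: contraT => /existsPn noc.
case/negP: (no_tadpole (vB |: component (~: A :\ vB) y)).
apply: (component_tadpole (h1 := inr true) cB vBB yW) => //.
- by apply/negP=> /(subsetP CW); rewrite !inE vAA andbF.
- by apply/negP=> /(subsetP CW); rewrite setD11.
- by apply: candidate_free_closed CW _ => v _; apply: noc.
Qed.

Lemma residual_maximal (A : {set V}) v : AB_cut src tgt vA vB A -> candidate A v ->
  (forall v', candidate A v' -> #|residual A v'| <= #|residual A v|) ->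
  residual A v = ~: A :\ v.
Proof.
case/and4P=> vAA vBB _ cB /and3P[vnA vvB /exists_inP[a aA va]] maxv.
have vBW : vB \in ~: A :\ v by rewrite in_setD1 eq_sym vvB.
apply/eqP; rewrite eqEsubset component_sub //=.
apply/subsetP=> y yW; apply: contraT => yR.
set C := component (~: A :\ v) y.
have CW : C \subset ~: A :\ v := component_sub src tgt yW.
have C_R z : z \in C -> z \notin residual A v.
  by move=> zC; apply: contra yR => zR; apply: component_trans zR _; rewrite component_sym.
have vBC : vB \notin C by apply: contraL (component_id src tgt _ vB); apply: C_R.
have [/exists_inP[v' v'C cv'] | /exists_inPn noc] := boolP [exists v' in C, candidate A v'].
  have := maxv v' cv'; rewrite leqNgt => /negP[]; apply: proper_card.
  by apply: component_setD1_proper cB vBW _ (subsetP CW _ v'C) (C_R _ v'C); rewrite inE.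
have CB : C \subset ~: A :\ vB.
  apply/subsetP=> z zC; rewrite in_setD1 (subsetP (subD1set _ v) _ (subsetP CW _ zC)).
  by rewrite andbT; apply: contraNneq vBC => <-.
case/negP: (no_tadpole (v |: C)).
have [e [b [ev ea]]] := adjacentP _ _ va.
apply: (component_tadpole (h1 := inl (e, b)) cB _ yW) => //.
- by rewrite inE.
- by apply/negP=> /(subsetP CW); rewrite !inE vAA andbF.
- exact: candidate_free_closed CB noc.
- rewrite inner_halfE ea negb_and orbC in_setU1 negb_or; apply/orP; left.
  apply/andP; split.
    by apply: contraNneq vnA => <-.
  by apply/negP=> /(subsetP CW); rewrite !inE aA andbF.
Qed.

Lemma cut_extension (A : {set V}) : AB_cut src tgt vA vB A -> 1 < #|~: A| ->
  exists2 v, v \notin A & AB_cut src tgt vA vB (v |: A).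
Proof.
move=> cutA gt1; have [v0 c0] := candidate_exists cutA gt1.
have [v cv maxv] := @arg_maxnP _ v0 (candidate A) (fun v => #|residual A v|) c0.
have full := residual_maximal cutA cv maxv.
case/and4P: cutA => vAA vBB cA _; case/and3P: cv => vnA vvB /exists_inP[a aA va].
exists v => //; apply/and4P; split.
- by rewrite setU1r.
- by rewrite !inE negb_or eq_sym vvB -in_setC.
- by apply: connected_setU1 cA aA _; rewrite adjacent_sym.
- have -> : ~: (v |: A) = residual A v by rewrite full; apply/setP=> x; rewrite !inE negb_or.
  exact: connected_component.
Qed.

Definition grow (A : {set V}) : {set V} :=
  if [pick v | (v \notin A) && AB_cut src tgt vA vB (v |: A)] is Some v then v |: A
  else setT.

Lemma grow_cut (A : {set V}) v : v \notin A -> AB_cut src tgt vA vB (v |: A) ->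
  AB_cut src tgt vA vB (grow A) /\ #|grow A| = #|A|.+1.
Proof.
move=> vnA cutvA; rewrite /grow; case: pickP => [u /andP[unA cutuA] | /(_ v)].
  by rewrite cardsU1 unA.
by rewrite vnA cutvA.
Qed.

Lemma grow_proper (A : {set V}) : A != setT -> A \proper grow A.
Proof.
rewrite /grow -properT; case: pickP => // u /andP[unA _] _.
by rewrite properUr // sub1set.
Qed.

Lemma cut_set1 : AB_cut src tgt vA vB [set vA].
Proof.
case: phi4 => nAB _ _ _ _; apply/and4P; split.
- exact: set11.
- by rewrite !inE eq_sym.
- by apply: (connected_set_from (set11 vA)) => y /set1P->; apply: connect0.
- exact: connected_setC1.
Qed.

Definition cut_chain p := iter p grow set0.

Lemma cut_chain_cut p : 0 < p < #|V| ->
  AB_cut src tgt vA vB (cut_chain p) /\ #|cut_chain p| = p.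
Proof.
elim: p => [//|[|p] IH] /andP[_ ltpV].
  by have := @grow_cut set0 vA; rewrite in_set0 setU0 cards0; apply=> //; apply: cut_set1.
have [cutp cardp] := IH (ltnW ltpV).
have gt1 : 1 < #|~: cut_chain p.+1| by rewrite cardsCs setCK cardp; lia.
have [v vnA cutvA] := cut_extension cutp gt1.
by have [cut' ->] := grow_cut vnA cutvA; rewrite cardp.
Qed.

Lemma cut_chain_proper p : p < #|V| -> cut_chain p \proper cut_chain p.+1.
Proof.
move=> ltpV; apply: grow_proper; apply/eqP=> chainT.
case: p ltpV chainT => [|p] ltpV chainT.
  by move: ltpV; rewrite -cardsT -chainT cards0.
have [/and4P[_ vBB _ _] _] := @cut_chain_cut p.+1 ltpV.
by rewrite chainT inE in_setT in vBB.
Qed.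

Lemma cut_chain_full : cut_chain #|V| = setT.
Proof.
case: phi4 => nAB _ _ _ _.
have gt1 : 1 < #|V| by apply/card_gt1P; exists vA, vB.
have [_ card_pred] := @cut_chain_cut #|V|.-1 ltac:(lia).
apply/eqP; rewrite eqEcard subsetT cardsT.
have := proper_card (@cut_chain_proper #|V|.-1 ltac:(lia)).
by rewrite prednK ?card_pred; lia.
Qed.

End Phi4.

Theorem lemma1 (V E : finType) (src tgt : E -> V) (vA vB : V) :
  2 <= #|V| ->
  two_point_phi4 src tgt vA vB ->
  (forall S : {set V}, ~~ gen_tadpole src tgt vA vB S) ->
  exists A : nat -> {set V},
    [/\ A 0 = set0, A #|V| = setT,
        (forall p, p < #|V| -> A p \proper A p.+1)
      & (forall p, 0 < p < #|V| -> AB_cut src tgt vA vB (A p))].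
Proof.
(* [2 <= #|V|] already follows from [vA != vB]. *)
move=> _ phi4 no_tadpole; exists (cut_chain src tgt vA vB); split=> //.
- exact: cut_chain_full.
- exact: cut_chain_proper.
- by move=> p /(cut_chain_cut phi4 no_tadpole) [].
Qed.
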